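(* Let $r\ge 2$ and, for $1\le j\le r$, let $(\alpha^{[j]}_{h})_{h\in\mathbb{N}}$ be sequences of positive reals with $\alpha^{[j]}_h\neq\alpha^{[j]}_\ell$ for $1\le h<\ell<\infty$. In the $r$-type urn model II with these weights, started from $\mathbf{n}=(n_1,\dots,n_r)$ with all $n_j\ge1$, let $\mathbf{X}_{\mathbf{n}}=(X^{[1]}_{\mathbf{n}},\dots,X^{[r-1]}_{\mathbf{n}})$. Then for all $\mathbf{k}=(k_1,\dots,k_{r-1})$ with $1\le k_j\le n_j$, \[ \mathbb{P}\{\mathbf{X}_{\mathbf{n}}=\mathbf{k}\}=\sum_{\ell_1=k_1}^{n_1}\cdots\sum_{\ell_{r-1}=k_{r-1}}^{n_{r-1}}\frac{\Big(\prod_{j=1}^{r-1}\alpha^{[j]}_{k_j}\Big)\prod_{j=1}^{r-1}\big(\alpha^{[j]}_{\ell_j}\big)^{n_j-k_j+n_r-1}}{\prod_{f=1}^{n_r}\Big(\prod_{j=1}^{r-1}\alpha^{[j]}_{\ell_j}+\alpha^{[r]}_f\sum_{g=1}^{r-1}\frac{\prod_{j=1}^{r-1}\alpha^{[j]}_{\ell_j}}{\alpha^{[g]}_{\ell_g}}\Big)\prod_{j=1}^{r-1}\prod_{\substack{h_j=k_j\\ h_j\neq\ell_j}}^{n_j}\big(\alpha^{[j]}_{\ell_j}-\alpha^{[j]}_{h_j}\big)}. \]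
   Context: $r$-type urn model II: the urn contains balls of types $1,\dots,r$, initially $n_j$ balls of type $j$. At each step, if the urn contains $n'_j$ balls of type $j$ ($1\le j\le r$), a ball of type $\ell$ is drawn with probability \[ \frac{(1-\delta_{n'_\ell,0})\prod_{j\neq\ell}(\alpha^{[j]}_{n'_j})^{1-\delta_{n'_j,0}}}{\sum_{h=1}^{r}(1-\delta_{n'_h,0})\prod_{j\neq h}(\alpha^{[j]}_{n'_j})^{1-\delta_{n'_j,0}}} \] ($\delta$ the Kronecker delta) and discarded. The process stops when either all type $r$ balls have been drawn or all balls of types $1,\dots,r-1$ have been drawn. $X^{[j]}_{\mathbf{n}}$ is the number of type $j$ balls in the urn when the process stops. Empty products equal $1$. *)

(* Types are numbered 1..r (as in the paper); states of the
   urn are functions  n : nat -> nat  (only the values at 1..r matter).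
   Weights: alpha j h = alpha^{[j]}_h. *)
From mathcomp Require Import all_boot all_order all_algebra.
Set Implicit Arguments. Unset Strict Implicit. Unset Printing Implicit Defensive.
Import Order.TTheory GRing.Theory Num.Theory.
Local Open Scope ring_scope.

Section Urn.
Variable R : realFieldType.

Definition urn_stopped (r : nat) (n : nat -> nat) : bool :=
  (n r == 0%N) || all (fun j => n j == 0%N) (iota 1 r.-1).

Definition draw_weight (r : nat) (alpha : nat -> nat -> R) (n : nat -> nat)
    (l : nat) : R :=
  if n l == 0%N then 0
  else \prod_(1 <= j < r.+1 | j != l) (if n j == 0%N then 1 else alpha j (n j)).

Definition draw_prob (r : nat) (alpha : nat -> nat -> R) (n : nat -> nat)
    (l : nat) : R :=
  draw_weight r alpha n l / \sum_(1 <= h < r.+1) draw_weight r alpha n h.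

Definition urn_decr (n : nat -> nat) (l : nat) : nat -> nat :=
  fun j => if j == l then (n j).-1 else n j.

Fixpoint absorb_prob (r : nat) (alpha : nat -> nat -> R) (k : nat -> nat)
    (fuel : nat) (n : nat -> nat) : R :=
  if urn_stopped r n then
    (if all (fun j => n j == k j) (iota 1 r.-1) then 1 else 0)
  else match fuel with
       | 0%N => 0
       | f.+1 => \sum_(1 <= l < r.+1)
                   draw_prob r alpha n l * absorb_prob r alpha k f (urn_decr n l)
       end.

(* P{ X_n = k } where X_n = (X^{[1]}_n, ..., X^{[r-1]}_n); the total number
   of balls is enough fuel since each draw removes one ball. *)
Definition prob_X (r : nat) (alpha : nat -> nat -> R) (n k : nat -> nat) : R :=
  absorb_prob r alpha k (\sum_(1 <= j < r.+1) n j) n.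

(* iterated sum  sum_{l_1 = lo 1}^{hi 1} ... sum_{l_m = lo m}^{hi m} F l,
   where the summation indices are collected in l : nat -> nat
   (l j = l_j for 1 <= j <= m; other values are 0 / irrelevant). *)
Fixpoint msum (m : nat) (lo hi : nat -> nat) (F : (nat -> nat) -> R) : R :=
  match m with
  | 0%N => F (fun _ => 0%N)
  | m'.+1 => \sum_(lo m <= x < (hi m).+1)
               msum m' lo hi (fun l => F (fun j => if j == m then x else l j))
  end.

Definition thm4_term (r : nat) (alpha : nat -> nat -> R) (n k l : nat -> nat) : R :=
  let P := \prod_(1 <= j < r) alpha j (l j) in
  ((\prod_(1 <= j < r) alpha j (k j)) *
     \prod_(1 <= j < r) alpha j (l j) ^+ (n j - k j + n r - 1)%N)
  / ((\prod_(1 <= f < (n r).+1)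
        (P + alpha r f * \sum_(1 <= g < r) P / alpha g (l g))) *
     \prod_(1 <= j < r)
        \prod_(k j <= h < (n j).+1 | h != l j) (alpha j (l j) - alpha j h)).

End Urn.

(* Write the right-hand side for an arbitrary current state [m] as a sum over
   [k <= t <= m] of weights [W m t]; it then satisfies the same first-step
   recursion as the absorption probability.  While every type is present a
   type-[l] ball is drawn with probability proportional to [1 / alpha l (m l)],
   and removing it multiplies [W m t] by [1 - alpha l (m l) / alpha l (t l)]
   for [l < r] and by [1 + alpha r (m r) * s t] for [l = r], where [s t] is the
   sum of the [1 / alpha j (t j)], [j < r]; weighted by [1 / alpha l (m l)],
   the corrections [- 1 / alpha l (t l)] and [+ s t] cancel.  Once the type-[r]
   balls are exhausted the sum factorises over the types, and each factor is a
   divided difference of a monomial of too small a degree unless [m j = k j]. *)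

From mathcomp Require Import all_boot all_order all_algebra.
From mathcomp Require Import zify ring lra.
Set Implicit Arguments. Unset Strict Implicit. Unset Printing Implicit Defensive.
Import Order.TTheory GRing.Theory Num.Theory.
Local Open Scope ring_scope.

Section IteratedSum.
Variable R : realFieldType.
Implicit Types (F G : (nat -> nat) -> R) (lo hi : nat -> nat).

Definition in_box m lo hi (t : nat -> nat) :=
  forall j, (1 <= j <= m)%N -> (lo j <= t j <= hi j)%N.

Lemma eq_msum m lo hi F G :
  (forall t, in_box m lo hi t -> F t = G t) -> msum m lo hi F = msum m lo hi G.
Proof.
elim: m F G => [|m IH] F G FG /=; first by apply: FG => j; lia.
apply: eq_big_nat => x /andP[lo_x x_hi]; apply: IH => t t_box; apply: FG => j j_m.
by case: eqP => [->|ne]; [rewrite lo_x -ltnS x_hi | apply: t_box; lia].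
Qed.

Lemma eq_msum_hi m lo hi hi' F :
  (forall j, (1 <= j <= m)%N -> hi j = hi' j) -> msum m lo hi F = msum m lo hi' F.
Proof.
elim: m F => [|m IH] F hiE //=.
rewrite hiE ?leqnn //; apply: eq_bigr => x _; apply: IH => j j_m; apply: hiE; lia.
Qed.

Lemma msum0 m lo hi : msum m lo hi (fun _ => 0 : R) = 0.
Proof. by elim: m => [|m IH] //=; rewrite big1. Qed.

Lemma msumD m lo hi F G :
  msum m lo hi (fun t => F t + G t) = msum m lo hi F + msum m lo hi G.
Proof.
elim: m F G => [|m IH] F G //=; rewrite -big_split /=.
by apply: eq_bigr => x _; rewrite IH.
Qed.

Lemma msumZ m lo hi (c : R) F :
  msum m lo hi (fun t => c * F t) = c * msum m lo hi F.
Proof.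
elim: m F => [|m IH] F //=; rewrite mulr_sumr.
by apply: eq_bigr => x _; rewrite IH.
Qed.

Lemma msum_sum m lo hi (I : seq nat) (F : nat -> (nat -> nat) -> R) :
  msum m lo hi (fun t => \sum_(i <- I) F i t) = \sum_(i <- I) msum m lo hi (F i).
Proof.
elim: m F => [|m IH] F //=.
by under eq_bigr do rewrite IH; rewrite exchange_big.
Qed.

Lemma msum_prod m lo hi (f : nat -> nat -> R) :
  msum m lo hi (fun t => \prod_(1 <= j < m.+1) f j (t j)) =
  \prod_(1 <= j < m.+1) \sum_(lo j <= x < (hi j).+1) f j x.
Proof.
elim: m => [|m IH] /=; first by rewrite !big_geq.
rewrite [RHS]big_nat_recr //= mulrC mulr_suml; apply: eq_bigr => x _.
rewrite -IH -msumZ; apply: eq_msum => t _.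
rewrite big_nat_recr //= eqxx mulrC; congr (_ * _).
by apply: eq_big_nat => j j_m; rewrite ifN //; lia.
Qed.

Lemma msum_urn_decr m lo hi F l :
  (1 <= l <= m)%N -> (1 <= lo l <= hi l)%N ->
  msum m lo (urn_decr hi l) F =
  msum m lo hi (fun t => if (t l < hi l)%N then F t else 0).
Proof.
elim: m F => [|m IH] F l_m lo_hi /=; first lia.
have [l_lt|/eqP l_eq] : (l < m.+1)%N \/ l == m.+1 by lia.
  have l_neq : l != m.+1 by lia.
  have -> : urn_decr hi l m.+1 = hi m.+1 by rewrite /urn_decr eq_sym (negbTE l_neq).
  apply: eq_bigr => x _; rewrite IH; try lia.
  by apply: eq_msum => t _; rewrite (negbTE l_neq).
subst l; rewrite {1}/urn_decr eqxx prednK; last lia.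
rewrite [RHS]big_nat_recr /=; last lia.
rewrite (@eq_msum _ _ _ (fun t => _) (fun _ => 0)); last by move=> t _; rewrite ltnn.
rewrite msum0 addr0; apply: eq_big_nat => x /andP[_ x_hi].
rewrite x_hi; apply: eq_msum_hi => j j_m; rewrite /urn_decr; case: eqP => //; lia.
Qed.

End IteratedSum.

Section DividedDifference.
Variables (R : realFieldType) (x : nat -> R).

Definition divdiff_pow lo hi d : R :=
  \sum_(lo <= l < hi.+1) x l ^+ d / \prod_(lo <= h < hi.+1 | h != l) (x l - x h).

Definition nodes_distinct lo hi :=
  forall h l, (lo <= h <= hi)%N -> (lo <= l <= hi)%N -> h != l -> x h != x l.

Lemma nodes_distinct_sub lo hi lo' hi' :
  (lo <= lo')%N -> (hi' <= hi)%N -> nodes_distinct lo hi -> nodes_distinct lo' hi'.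
Proof. by move=> lo_lo' hi'_hi xD h l *; apply: xD => //; lia. Qed.

Lemma nodes_sub_neq0 lo hi h l : nodes_distinct lo hi ->
  (lo <= h <= hi)%N -> (lo <= l <= hi)%N -> h != l -> x l - x h != 0.
Proof. by move=> xD *; rewrite subr_eq0 xD // eq_sym. Qed.

Lemma prod_nodes_neq0 lo hi l : nodes_distinct lo hi -> (lo <= l <= hi)%N ->
  \prod_(lo <= h < hi.+1 | h != l) (x l - x h) != 0.
Proof.
move=> xD l_in; rewrite prodf_seq_neq0; apply/allP => h; rewrite mem_index_iota => h_in.
by apply/implyP => h_l; apply: (nodes_sub_neq0 xD); lia.
Qed.

Lemma prod_nodes_recr lo hi l : (lo <= hi.+1)%N -> l != hi.+1 ->
  \prod_(lo <= h < hi.+2 | h != l) (x l - x h) =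
  (\prod_(lo <= h < hi.+1 | h != l) (x l - x h)) * (x l - x hi.+1).
Proof. by move=> *; rewrite big_mkcond big_nat_recr // -big_mkcond /= eq_sym ifT. Qed.

Lemma divdiff_pow1 lo d : divdiff_pow lo lo d = x lo ^+ d.
Proof. by rewrite /divdiff_pow big_nat1 big_mkcond big_nat1 eqxx invr1 mulr1. Qed.

Lemma divdiff_powSr lo hi d : nodes_distinct lo hi.+1 -> (lo <= hi)%N ->
  divdiff_pow lo hi.+1 d.+1 = x hi.+1 * divdiff_pow lo hi.+1 d + divdiff_pow lo hi d.
Proof.
move=> xD lo_hi; apply/eqP; rewrite addrC -subr_eq /divdiff_pow mulr_sumr -sumrB.
rewrite big_nat_recr /=; last lia.
rewrite exprS mulrA -mulrBl subrr mul0r addr0; apply/eqP/eq_big_nat => l l_in.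
rewrite prod_nodes_recr; try lia.
have xl_neq : x l - x hi.+1 != 0 by apply: (nodes_sub_neq0 xD); lia.
have P_neq := @prod_nodes_neq0 lo hi l (nodes_distinct_sub (leqnn _) (leqnSn _) xD).
by rewrite exprS; field; rewrite xl_neq P_neq //; lia.
Qed.

Lemma divdiff_powSl lo hi d : nodes_distinct lo hi -> (lo < hi)%N ->
  divdiff_pow lo hi d.+1 = x lo * divdiff_pow lo hi d + divdiff_pow lo.+1 hi d.
Proof.
move=> xD lo_hi; apply/eqP; rewrite addrC -subr_eq /divdiff_pow mulr_sumr -sumrB.
rewrite big_ltn /=; last lia.
rewrite exprS mulrA -mulrBl subrr mul0r add0r; apply/eqP/eq_big_nat => l l_in.
rewrite big_ltn_cond /=; last lia.
rewrite ifT; last lia.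
have xl_neq : x l - x lo != 0 by apply: (nodes_sub_neq0 xD); lia.
have P_neq := @prod_nodes_neq0 lo.+1 hi l (nodes_distinct_sub (leqnSn _) (leqnn _) xD).
by rewrite exprS; field; rewrite xl_neq P_neq //; lia.
Qed.

Lemma divdiff_pow0 lo hi : nodes_distinct lo hi -> (lo < hi)%N ->
  divdiff_pow lo hi 0 = 0.
Proof.
move=> + lo_hi; have [n ->] : exists n, hi = (lo + n).+1 by exists (hi - lo).-1; lia.
have step m a : nodes_distinct a (a + m).+1 ->
    divdiff_pow a (a + m) 0 = divdiff_pow a.+1 (a.+1 + m) 0 ->
    divdiff_pow a (a + m).+1 0 = 0.
  move=> xD shift_eq; have := divdiff_powSl 0 xD (ltn_addr m (ltnSn a)).
  rewrite divdiff_powSr ?leq_addr // shift_eq addSn => /addIr/eqP.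
  rewrite -subr_eq0 -mulrBl mulf_eq0 (negbTE (nodes_sub_neq0 xD _ _ _)) //=; try lia.
  by move/eqP.
elim: n lo {hi lo_hi} => [|n IH] lo xD; apply: step => //.
  by rewrite !addn0 !divdiff_pow1.
rewrite !addnS !IH //; apply: nodes_distinct_sub xD; lia.
Qed.

Lemma divdiff_pow_eq0 lo hi d : nodes_distinct lo hi -> (lo + d < hi)%N ->
  divdiff_pow lo hi d = 0.
Proof.
elim: d hi => [|d IH] hi xD d_hi; first by apply: divdiff_pow0 => //; lia.
case: hi xD d_hi => [|hi] xD d_hi; first lia.
rewrite divdiff_powSr // ?IH ?mulr0 ?add0r //; try lia.
by apply: nodes_distinct_sub xD.
Qed.

End DividedDifference.

Section UrnSteps.
Variables (R : realFieldType) (r : nat) (alpha : nat -> nat -> R) (k : nat -> nat).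

Lemma absorb_prob_stopped fuel m : urn_stopped r m ->
  absorb_prob r alpha k fuel m = (all (fun j => m j == k j) (iota 1 r.-1))%:R.
Proof. by case: fuel => [|f] /= ->; case: all. Qed.

Lemma absorb_probS fuel m : ~~ urn_stopped r m ->
  absorb_prob r alpha k fuel.+1 m =
  \sum_(1 <= l < r.+1) draw_prob r alpha m l * absorb_prob r alpha k fuel (urn_decr m l).
Proof. by move=> /= /negbTE ->. Qed.

Lemma absorb_prob_below fuel m j : (1 <= j < r)%N -> (m j < k j)%N ->
  absorb_prob r alpha k fuel m = 0.
Proof.
move=> j_in; have unmatched m' : (m' j < k j)%N ->
    all (fun i => m' i == k i) (iota 1 r.-1) = false.
  move=> m_k; apply/negbTE/allP => /(_ j); rewrite mem_iota => /(_ ltac:(lia)); lia.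
elim: fuel m => [|f IH] m m_k; have [stop|run] := boolP (urn_stopped r m).
- by rewrite absorb_prob_stopped // unmatched.
- by rewrite /= (negbTE run).
- by rewrite absorb_prob_stopped // unmatched.
- rewrite absorb_probS // big1 // => l _; rewrite IH ?mulr0 //.
  by rewrite /urn_decr; case: eqP => _; lia.
Qed.

Lemma sum_urn_decr m l : (1 <= l <= r)%N -> (0 < m l)%N ->
  (\sum_(1 <= j < r.+1) urn_decr m l j).+1 = (\sum_(1 <= j < r.+1) m j)%N.
Proof.
move=> l_in m_l; have l_iota : l \in index_iota 1 r.+1 by rewrite mem_index_iota; lia.
rewrite !(bigD1_seq l l_iota (iota_uniq _ _)) /= /urn_decr eqxx -addSn prednK //.
by congr (_ + _)%N; apply: eq_bigr => i /negbTE ->.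
Qed.

Lemma draw_prob_inv_alpha m l :
  (forall j, (1 <= j <= r)%N -> (0 < m j)%N /\ alpha j (m j) != 0) ->
  (1 <= l <= r)%N ->
  draw_prob r alpha m l = (alpha l (m l))^-1 / \sum_(1 <= h < r.+1) (alpha h (m h))^-1.
Proof.
move=> m_full l_in; set A := \prod_(1 <= j < r.+1) alpha j (m j).
have A_neq0 : A != 0.
  rewrite prodf_seq_neq0; apply/allP => j; rewrite mem_index_iota => j_in /=.
  by have [] := m_full j ltac:(lia).
have weightE h : (1 <= h < r.+1)%N -> draw_weight r alpha m h = A * (alpha h (m h))^-1.
  move=> h_in; have [m_h a_h] := m_full h h_in.
  have h_iota : h \in index_iota 1 r.+1 by rewrite mem_index_iota; lia.
  rewrite /draw_weight ifN -?lt0n // /A (bigD1_seq h h_iota (iota_uniq _ _)) /=.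
  rewrite mulrAC mulfV // mul1r big_seq_cond [RHS]big_seq_cond.
  apply: eq_bigr => j /andP[j_iota _]; rewrite ifN // -lt0n.
  by move: j_iota; rewrite mem_index_iota => j_in; have [] := m_full j ltac:(lia).
rewrite /draw_prob weightE // (eq_big_nat _ _ weightE) -mulr_sumr invfM.
by rewrite mulrACA mulfV // mul1r.
Qed.

End UrnSteps.

Lemma prodr_natb (R : pzSemiRingType) (I : Type) (s : seq I) (b : pred I) :
  \prod_(i <- s) (b i)%:R = (all b s)%:R :> R.
Proof.
elim: s => [|i s IH]; rewrite ?big_nil ?big_cons //= IH.
by case: (b i); rewrite ?mul1r ?mul0r.
Qed.

Section UrnModelII.
Variables (R : realFieldType) (q : nat) (alpha : nat -> nat -> R) (k : nat -> nat).
Hypothesis q_gt0 : (0 < q)%N.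
Hypothesis alpha_gt0 : forall j h, (1 <= j <= q.+1)%N -> (0 < h)%N -> 0 < alpha j h.
Hypothesis alpha_neq : forall j h l, (1 <= j <= q)%N -> (0 < h)%N -> (0 < l)%N ->
  h != l -> alpha j h != alpha j l.
Hypothesis k_gt0 : forall j, (1 <= j <= q)%N -> (0 < k j)%N.

(* The type-[j] factor of the summand in the statement, with its
   [alpha j l ^+ (n r - 1)] cancelled against the denominator. *)
Definition coef j m l : R := alpha j (k j) * alpha j l ^+ (m - k j) /
  (alpha j l * \prod_(k j <= h < m.+1 | h != l) (alpha j l - alpha j h)).

Definition inv_alpha_sum (t : nat -> nat) : R := \sum_(1 <= g < q.+1) (alpha g (t g))^-1.

Definition last_type_factor p t : R :=
  \prod_(1 <= f < p.+1) (1 + alpha q.+1 f * inv_alpha_sum t)^-1.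

Definition weight (m t : nat -> nat) : R :=
  (\prod_(1 <= j < q.+1) coef j (m j) (t j)) * last_type_factor (m q.+1) t.

Definition absorb_formula m : R := msum q k m (weight m).

Lemma alpha_neq0 j h : (1 <= j <= q.+1)%N -> (0 < h)%N -> alpha j h != 0.
Proof. by move=> *; rewrite gt_eqF ?alpha_gt0. Qed.

Lemma alpha_nodes_distinct j m : (1 <= j <= q)%N -> nodes_distinct (alpha j) (k j) m.
Proof. by move=> j_in h l *; apply: alpha_neq => //; have := k_gt0 j_in; lia. Qed.

Lemma coef_sum j m : (1 <= j <= q)%N -> (k j <= m)%N ->
  \sum_(k j <= l < m.+1) coef j m l = (m == k j)%:R.
Proof.
move=> j_in k_m; have k_j := k_gt0 j_in.
have [->|m_k] : m = k j \/ (k j < m)%N by lia.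
  rewrite big_nat1 /coef big_mkcond big_nat1 /= subnn expr0 mulr1 eqxx mulr1.
  by rewrite mulfV // alpha_neq0 //; lia.
have D0 := divdiff_pow_eq0 (alpha_nodes_distinct (m:=m) j_in) (d := (m - k j).-1).
rewrite (gtn_eqF m_k).
transitivity (alpha j (k j) * divdiff_pow (alpha j) (k j) m (m - k j).-1); last first.
  by rewrite D0 ?mulr0 //; lia.
rewrite /divdiff_pow mulr_sumr; apply: eq_big_nat => l l_in.
have a_l : alpha j l != 0 by apply: alpha_neq0; lia.
have P_neq := prod_nodes_neq0 (alpha_nodes_distinct (m:=m) j_in) l_in.
rewrite /coef -(prednK (_ : 0 < m - k j)%N); last lia.
by rewrite exprS; field; rewrite a_l P_neq.
Qed.

Lemma coef_step j m l : (1 <= j <= q)%N -> (k j <= l <= m)%N ->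
  (alpha j m.+1)^-1 * coef j m l = coef j m.+1 l * ((alpha j m.+1)^-1 - (alpha j l)^-1).
Proof.
move=> j_in l_in; have k_j := k_gt0 j_in.
have a_l : alpha j l != 0 by apply: alpha_neq0; lia.
have a_m : alpha j m.+1 != 0 by apply: alpha_neq0; lia.
have a_lm : alpha j l - alpha j m.+1 != 0.
  by apply: (nodes_sub_neq0 (alpha_nodes_distinct (m:=m.+1) j_in)); lia.
have P_neq := prod_nodes_neq0 (alpha_nodes_distinct (m:=m) j_in) l_in.
rewrite /coef subSn; last lia.
rewrite prod_nodes_recr; try lia.
by rewrite exprS; field; rewrite a_l a_m a_lm P_neq.
Qed.

Lemma last_type_factor0 t : last_type_factor 0 t = 1.
Proof. by rewrite /last_type_factor big_geq. Qed.

Lemma last_type_factorS p t :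
  last_type_factor p.+1 t = last_type_factor p t * (1 + alpha q.+1 p.+1 * inv_alpha_sum t)^-1.
Proof. by rewrite /last_type_factor big_nat_recr. Qed.

Lemma absorb_formula_stopped m : (forall j, (1 <= j <= q)%N -> (k j <= m j)%N) ->
  m q.+1 = 0%N -> absorb_formula m = (all (fun j => m j == k j) (iota 1 q))%:R.
Proof.
move=> k_m m_last; rewrite /absorb_formula /weight m_last.
under eq_msum do rewrite last_type_factor0 mulr1.
rewrite (msum_prod _ _ _ (fun j => coef j (m j))) -prodr_natb.
rewrite (_ : iota 1 q = index_iota 1 q.+1); last by rewrite /index_iota subn1.
by apply: eq_big_nat => j j_in; rewrite coef_sum ?k_m //; lia.
Qed.

Lemma inv_alpha_sum_ge0 m t : in_box q k m t -> 0 <= inv_alpha_sum t.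
Proof.
move=> t_box; rewrite /inv_alpha_sum big_seq sumr_ge0 // => g.
rewrite mem_index_iota => g_in; rewrite invr_ge0 ltW // alpha_gt0 //; first lia.
by have := t_box g ltac:(lia); have := k_gt0 (j := g) ltac:(lia); lia.
Qed.

Lemma absorb_formula_decr_last m : (0 < m q.+1)%N ->
  (alpha q.+1 (m q.+1))^-1 * absorb_formula (urn_decr m q.+1) =
  msum q k m (fun t => weight m t * ((alpha q.+1 (m q.+1))^-1 + inv_alpha_sum t)).
Proof.
move=> m_last; have decr_j j : (j <= q)%N -> urn_decr m q.+1 j = m j.
  by move=> j_q; rewrite /urn_decr ifN //; lia.
rewrite /absorb_formula (eq_msum_hi _ _ (hi' := m)) => [|j j_in]; last by rewrite decr_j //; lia.
rewrite -msumZ; apply: eq_msum => t t_box; rewrite /weight.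
rewrite (eq_big_nat _ _ (F2 := fun j => coef j (m j) (t j))) => [|j j_in]; last first.
  by rewrite decr_j //; lia.
have -> : urn_decr m q.+1 q.+1 = (m q.+1).-1 by rewrite /urn_decr eqxx.
move: (m q.+1) m_last => [|p] // _ /=; rewrite last_type_factorS.
have a_neq0 : alpha q.+1 p.+1 != 0 by apply: alpha_neq0; lia.
have den_neq0 : 1 + alpha q.+1 p.+1 * inv_alpha_sum t != 0.
  rewrite gt_eqF // ltr_pwDl // mulr_ge0 ?(inv_alpha_sum_ge0 t_box) // ltW // alpha_gt0 //; lia.
by field; rewrite a_neq0 den_neq0.
Qed.

Lemma absorb_formula_decr l m : (1 <= l <= q)%N -> (k l < m l)%N ->
  (alpha l (m l))^-1 * absorb_formula (urn_decr m l) =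
  msum q k m (fun t => weight m t * ((alpha l (m l))^-1 - (alpha l (t l))^-1)).
Proof.
move=> l_in k_m; have k_l := k_gt0 l_in.
rewrite /absorb_formula msum_urn_decr; try lia.
rewrite -msumZ; apply: eq_msum => t t_box; have := t_box l l_in.
case: ltnP => [t_m | m_t] t_l; last by rewrite (_ : t l = m l) ?subrr ?mulr0 //; lia.
have l_iota : l \in index_iota 1 q.+1 by rewrite mem_index_iota; lia.
rewrite /weight !(bigD1_seq l l_iota (iota_uniq _ _)) /=.
have -> : urn_decr m l q.+1 = m q.+1 by rewrite /urn_decr ifN //; lia.
have -> : \prod_(j <- index_iota 1 q.+1 | j != l) coef j (urn_decr m l j) (t j) =
          \prod_(j <- index_iota 1 q.+1 | j != l) coef j (m j) (t j).
  by apply: eq_bigr => j /negbTE j_l; rewrite /urn_decr j_l.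
have -> : urn_decr m l l = (m l).-1 by rewrite /urn_decr eqxx.
move: (m l) k_m t_m => [|p] // _ t_p.
rewrite succnK 2!mulrA coef_step //; first ring.
lia.
Qed.

Lemma absorb_prob_step f m :
  (forall m', (forall j, (1 <= j <= q)%N -> (k j <= m' j)%N) ->
     (\sum_(1 <= j < q.+2) m' j <= f)%N ->
     absorb_prob q.+1 alpha k f m' = absorb_formula m') ->
  (forall j, (1 <= j <= q)%N -> (k j <= m j)%N) ->
  (\sum_(1 <= j < q.+2) m j <= f.+1)%N -> (0 < m q.+1)%N ->
  absorb_prob q.+1 alpha k f.+1 m = absorb_formula m.
Proof.
move=> IH k_m m_f m_last.
have m_gt0 j : (1 <= j <= q.+1)%N -> (0 < m j)%N.
  move=> j_in; have [j_q|->] : (j <= q)%N \/ j = q.+1 by lia.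
    by have := k_m j ltac:(lia); have := k_gt0 (j := j) ltac:(lia); lia.
  exact: m_last.
have IH_decr l : (1 <= l <= q.+1)%N -> (forall j, (1 <= j <= q)%N -> (k j <= urn_decr m l j)%N) ->
    absorb_prob q.+1 alpha k f (urn_decr m l) = absorb_formula (urn_decr m l).
  move=> l_in k_decr; apply: IH => //.
  by have := sum_urn_decr l_in (m_gt0 l l_in); lia.
have type_step l : (1 <= l < q.+1)%N ->
    (alpha l (m l))^-1 * absorb_prob q.+1 alpha k f (urn_decr m l) =
    msum q k m (fun t => weight m t * ((alpha l (m l))^-1 - (alpha l (t l))^-1)).
  move=> l_in; have [k_ml|m_kl] : (k l < m l)%N \/ m l = k l by have := k_m l l_in; lia.
    rewrite IH_decr ?absorb_formula_decr //; try lia.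
    by move=> j j_in; rewrite /urn_decr; case: eqP => [->|_]; have := k_m j j_in; lia.
  rewrite (absorb_prob_below alpha f l_in) ?mulr0.
    rewrite -(msum0 _ q k m); apply: eq_msum => t t_box.
    by rewrite (_ : t l = m l) ?subrr ?mulr0 //; have := t_box l l_in; lia.
  by rewrite /urn_decr eqxx; have := k_gt0 l_in; lia.
have last_step :
    (alpha q.+1 (m q.+1))^-1 * absorb_prob q.+1 alpha k f (urn_decr m q.+1) =
    msum q k m (fun t => weight m t * ((alpha q.+1 (m q.+1))^-1 + inv_alpha_sum t)).
  rewrite IH_decr ?absorb_formula_decr_last //; try lia.
  by move=> j j_in; rewrite /urn_decr ifN ?k_m //; lia.
set B := \sum_(1 <= h < q.+2) (alpha h (m h))^-1.
have B_gt0 : 0 < B.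
  rewrite /B big_nat_recr //= ltr_wpDl //.
    rewrite big_seq sumr_ge0 // => j; rewrite mem_index_iota => j_in.
    by rewrite invr_ge0 ltW // alpha_gt0 ?m_gt0 //; lia.
  by rewrite invr_gt0 alpha_gt0 //; lia.
rewrite absorb_probS; last first.
  rewrite /urn_stopped negb_or -lt0n m_last /=; apply/allPn; exists 1%N.
    by rewrite mem_iota; lia.
  by rewrite -lt0n m_gt0.
rewrite (eq_big_nat _ _ (F2 := fun l => B^-1 *
    ((alpha l (m l))^-1 * absorb_prob q.+1 alpha k f (urn_decr m l)))); last first.
  move=> l l_in; rewrite draw_prob_inv_alpha; last lia.
    by rewrite /B; ring.
  by move=> j j_in; split; [apply: m_gt0 | apply: alpha_neq0; rewrite ?m_gt0]; lia.
rewrite -mulr_sumr big_nat_recr //= last_step (eq_big_nat _ _ type_step).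
rewrite -msum_sum -msumD -[absorb_formula m](mulKf (lt0r_neq0 B_gt0)).
congr (_ * _); rewrite /absorb_formula -msumZ; apply: eq_msum => t _.
rewrite -mulr_sumr -mulrDr mulrC; congr (_ * _).
rewrite sumrB /B [in RHS]big_nat_recr //= /inv_alpha_sum; ring.
Qed.

Lemma absorb_prob_eq_formula fuel m :
  (forall j, (1 <= j <= q)%N -> (k j <= m j)%N) ->
  (\sum_(1 <= j < q.+2) m j <= fuel)%N ->
  absorb_prob q.+1 alpha k fuel m = absorb_formula m.
Proof.
elim: fuel m => [|f IH] m k_m m_fuel.
  have m_last : m q.+1 = 0%N by move: m_fuel; rewrite big_nat_recr //=; lia.
  by rewrite absorb_prob_stopped ?absorb_formula_stopped // /urn_stopped m_last.
have [m_last|m_last] := posnP (m q.+1).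
  by rewrite absorb_prob_stopped ?absorb_formula_stopped // /urn_stopped m_last.
exact: absorb_prob_step.
Qed.

Lemma weight_thm4_term n t : (0 < n q.+1)%N -> in_box q k n t ->
  weight n t = thm4_term q.+1 alpha n k t.
Proof.
move=> n_last t_box; rewrite /thm4_term; cbv zeta.
set P := \prod_(1 <= j < q.+1) alpha j (t j).
have -> : \sum_(1 <= g < q.+1) P / alpha g (t g) = P * inv_alpha_sum t.
  by rewrite /inv_alpha_sum mulr_sumr.
have -> : \prod_(1 <= f < (n q.+1).+1) (P + alpha q.+1 f * (P * inv_alpha_sum t)) =
    P ^+ n q.+1 * \prod_(1 <= f < (n q.+1).+1) (1 + alpha q.+1 f * inv_alpha_sum t).
  have -> : P ^+ n q.+1 = \prod_(1 <= f < (n q.+1).+1) P.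
    by rewrite prodr_const_nat subSS subn0.
  rewrite -big_split.
  by apply: eq_bigr => f _ /=; ring.
rewrite /P -prodrXl /weight /last_type_factor prodfV.
set N := n q.+1; set E := \prod_(1 <= f < N.+1) _.
transitivity ((\prod_(1 <= j < q.+1) (alpha j (k j) * alpha j (t j) ^+ (n j - k j + N - 1) /
    (alpha j (t j) ^+ N * \prod_(k j <= h < (n j).+1 | h != t j) (alpha j (t j) - alpha j h)))) / E);
  last by rewrite !(big_split, prodfV) /= !invfM; ring.
congr (_ / _); apply: eq_big_nat => j j_in; have t_j := t_box j ltac:(lia).
have a_neq0 : alpha j (t j) != 0 by apply: alpha_neq0; have := k_gt0 (j := j) ltac:(lia); lia.
have P_neq0 := prod_nodes_neq0 (alpha_nodes_distinct (m := n j) (j := j) ltac:(lia)) t_j.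
rewrite /coef /N; case: (n q.+1) n_last => [|p] // _.
rewrite addnS subn1 succnK exprD exprS; field.
by rewrite a_neq0 P_neq0 expf_neq0.
Qed.

End UrnModelII.

Unset Implicit Arguments.

Theorem theorem4 (R : realFieldType) (r : nat) (alpha : nat -> nat -> R)
    (n k : nat -> nat) :
  (2 <= r)%N ->
  (forall j h, (1 <= j <= r)%N -> (1 <= h)%N -> 0 < alpha j h) ->
  (forall j h l, (1 <= j <= r)%N -> (1 <= h)%N -> (h < l)%N ->
     alpha j h != alpha j l) ->
  (forall j, (1 <= j <= r)%N -> (1 <= n j)%N) ->
  (forall j, (1 <= j < r)%N -> (1 <= k j <= n j)%N) ->
  prob_X r alpha n k = msum (r.-1) k n (fun l => thm4_term r alpha n k l).
Proof.
case: r => [|q] // q_gt0 alpha_gt0 alpha_lt_neq n_gt0 k_in.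
have alpha_neq j h l : (1 <= j <= q)%N -> (0 < h)%N -> (0 < l)%N -> h != l ->
    alpha j h != alpha j l.
  move=> j_in h_gt0 l_gt0; rewrite neq_ltn => /orP[h_l|l_h].
    by apply: alpha_lt_neq => //; lia.
  by rewrite eq_sym; apply: alpha_lt_neq => //; lia.
have k_gt0 j : (1 <= j <= q)%N -> (0 < k j)%N.
  by move=> j_in; have := k_in j ltac:(lia); lia.
have k_n j : (1 <= j <= q)%N -> (k j <= n j)%N.
  by move=> j_in; have := k_in j ltac:(lia); lia.
rewrite /prob_X (absorb_prob_eq_formula q_gt0 alpha_gt0 alpha_neq k_gt0 k_n) //.
apply: eq_msum => t t_box; apply: weight_thm4_term => //.
by apply: n_gt0; lia.
Qed.
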